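(* Let $S=(\mathcal{E},\Sigma,X,\mathcal{O})$ be a distinguishable experiment entity, with central eigen closure system $\mathcal{Y}_{eig}$ and state eigen closure system $\mathcal{F}_{eig}$. Then $\mathcal{F}_{eig}=\mathcal{Y}_{eig}(state)$.
   Context: An entity $S=(\mathcal{E},\Sigma,X,\mathcal{O})$ consists of sets $\mathcal{E},\Sigma$ and for each $e\in\mathcal{E},p\in\Sigma$ a nonempty set $O(e,p)$, with $X=\bigcup O(e,p)$; $O(e)=\bigcup_pO(e,p)$. It is a distinguishable experiment entity iff $O(e)\cap O(f)=\emptyset$ for all distinct $e,f\in\mathcal{E}$. Central eigen map: $(e,p)\in eig(A)\iff O(e,p)\subseteq A$ for $A\subseteq X$; $\mathcal{Y}_{eig}=\{eig(A):A\subseteq X\}$. For $Y\in\mathcal{Y}_{eig}$, $Y_{state}=\{p\in\Sigma:(e,p)\in Y\text{ for all }e\in\mathcal{E}\}$ and $\mathcal{Y}_{eig}(state)=\{Y_{state}:Y\in\mathcal{Y}_{eig}\}$. For $e\in\mathcal{E}$, $eig_e(A)=\{p: O(e,p)\subseteq A\}$ for $A\subseteq O(e)$, $\mathcal{F}(e)=\{eig_e(A):A\subseteq O(e)\}$, and $\mathcal{F}_{eig}$ is the set of all intersections of families of elements of $\bigcup_e\mathcal{F}(e)$. *)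

From mathcomp Require Import all_boot.
From mathcomp Require Import boolp classical_sets.
Set Implicit Arguments. Unset Strict Implicit. Unset Printing Implicit Defensive.
Local Open Scope classical_set_scope.

Section Entity.
Variables (E Sig Out : Type) (O : E -> Sig -> set Out).

Definition ent_X : set Out := \bigcup_(e in [set: E]) \bigcup_(p in [set: Sig]) O e p.
Definition ent_Oe (e : E) : set Out := \bigcup_(p in [set: Sig]) O e p.

Definition entity_nonempty : Prop := forall e p, O e p !=set0.

Definition distinguishable : Prop :=
  forall e f : E, e <> f -> ent_Oe e `&` ent_Oe f = set0.

Definition eig (A : set Out) : set (E * Sig) := [set ep | O ep.1 ep.2 `<=` A].

Definition Y_eig : set (set (E * Sig)) :=
  [set Y | exists A, A `<=` ent_X /\ Y = eig A].

Definition Y_state (Y : set (E * Sig)) : set Sig := [set p | forall e, Y (e, p)].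

Definition Y_eig_state : set (set Sig) :=
  [set Z | exists Y, Y_eig Y /\ Z = Y_state Y].

Definition eig_e (e : E) (A : set Out) : set Sig := [set p | O e p `<=` A].

Definition F_e (e : E) : set (set Sig) :=
  [set Z | exists A, A `<=` ent_Oe e /\ Z = eig_e e A].

(* all intersections of families of elements of \bigcup_e F(e);
   the empty family has intersection Sig (setT) *)
Definition F_eig : set (set Sig) :=
  [set Z | exists G : set (set Sig), G `<=` \bigcup_(e in [set: E]) F_e e /\
                                    Z = \bigcap_(W in G) W].
End Entity.

From mathcomp Require Import all_boot.
From mathcomp Require Import boolp classical_sets.
Local Open Scope classical_set_scope.

(* Each eig_e e commutes with arbitrary intersections, so every F(e) is closed
   under them and F_eig consists exactly of the intersections of families
   (Z_e)_e with Z_e in F(e).  On the other side, the state part of eig A is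
   the intersection of the eig_e e (A ∩ O(e)); distinguishability lets any
   family A_e ⊆ O(e) be glued into A = ⋃_e A_e with A ∩ O(e) = A_e, so the
   state parts of central eigensets are exactly the same intersections. *)

Section EigenClosure.
Variables (E Sig Out : Type) (O : E -> Sig -> set Out).

Lemma eig_eIOe (e : E) (A : set Out) :
  eig_e O e (A `&` ent_Oe O e) = eig_e O e A.
Proof.
apply/seteqP; split=> p /= sub x Ox; first by have [] := sub x Ox.
by split; [exact: sub | exists p].
Qed.

Lemma eig_e_bigcap (e : E) (I : Type) (P : set I) (A : I -> set Out) :
  eig_e O e (\bigcap_(i in P) A i) = \bigcap_(i in P) eig_e O e (A i).
Proof.
apply/seteqP; split=> p /= sub; first by move=> i Pi x /sub; apply.
by move=> x Ox i Pi; exact: sub.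
Qed.

Lemma F_e_bigcap (e : E) (G : set (set Sig)) :
  G `<=` F_e O e -> F_e O e (\bigcap_(W in G) W).
Proof.
move=> GFe.
pose As := [set A | A `<=` ent_Oe O e /\ G (eig_e O e A)].
have G_image : G = eig_e O e @` As.
  apply/seteqP; split=> [W GW | _ [A [_ GA] <-] //].
  have [A [AOe defW]] := GFe W GW.
  by exists A; rewrite // /As /= -defW.
exists (\bigcap_(A in As) A `&` ent_Oe O e); split; first exact: subIsetr.
by rewrite eig_eIOe eig_e_bigcap G_image bigcap_image.
Qed.

Definition F_meets : set (set Sig) :=
  [set Z | exists Zf : E -> set Sig,
    (forall e, F_e O e (Zf e)) /\ Z = \bigcap_(e in [set: E]) Zf e].

Lemma F_eig_F_meets : F_eig O = F_meets.
Proof.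
apply/seteqP; split=> Z.
- move=> [G [GF ->]].
  exists (fun e => \bigcap_(W in G `&` F_e O e) W); split.
    by move=> e; apply: F_e_bigcap => W [].
  apply/seteqP; split=> p /= Gp.
    by move=> e _ W [GW _]; exact: Gp.
  by move=> W GW; have [e _ FeW] := GF W GW; exact: Gp e I W (conj GW FeW).
- move=> [Zf [FZf ->]].
  exists (Zf @` setT); split; last by rewrite bigcap_image.
  by move=> _ [e _ <-]; exists e.
Qed.

Lemma Y_state_eig (A : set Out) :
  Y_state (eig O A) = \bigcap_(e in [set: E]) eig_e O e (A `&` ent_Oe O e).
Proof.
apply/seteqP; split=> p /= Ap e; rewrite ?eig_eIOe; first by move=> _; exact: Ap.
by have := Ap e I; rewrite eig_eIOe.
Qed.

Lemma Y_eig_state_sub_F_meets : Y_eig_state O `<=` F_meets.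
Proof.
move=> Z [Y [[A [_ ->]] ->]].
exists (fun e => eig_e O e (A `&` ent_Oe O e)); split; last exact: Y_state_eig.
by move=> e; exists (A `&` ent_Oe O e); split; first exact: subIsetr.
Qed.

Hypothesis O_dist : distinguishable O.

Lemma bigcupIOe (A : E -> set Out) (e : E) :
  (forall f, A f `<=` ent_Oe O f) ->
  (\bigcup_(f in [set: E]) A f) `&` ent_Oe O e = A e.
Proof.
move=> AOe; apply/seteqP; split=> [x [[f _ Afx] Oex] | x Aex].
  have [<- // | ef] := pselect (f = e).
  have : (ent_Oe O f `&` ent_Oe O e) x by split; first exact: AOe.
  by rewrite O_dist.
by split; [exists e | exact: AOe].
Qed.

Lemma F_meets_sub_Y_eig_state : F_meets `<=` Y_eig_state O.
Proof.
move=> Z [Zf [FZf ->]].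
have [Af AfP] := choice FZf.
pose A := \bigcup_(e in [set: E]) Af e.
have AfOe f : Af f `<=` ent_Oe O f by have [] := AfP f.
exists (eig O A); split.
  by exists A; split=> // x [e _ /AfOe Oex]; exists e.
rewrite Y_state_eig; apply: eq_bigcapr => e _.
by rewrite bigcupIOe //; have [_ ->] := AfP e.
Qed.

End EigenClosure.

Theorem mainTheorem7 (E Sig Out : Type) (O : E -> Sig -> set Out)
  (Hne : entity_nonempty O) (Hdist : distinguishable O) :
  F_eig O = Y_eig_state O.
Proof.
rewrite F_eig_F_meets; apply/seteqP; split.
- exact: F_meets_sub_Y_eig_state.
- exact: Y_eig_state_sub_F_meets.
Qed.
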